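(* Let $A\in\mathbb{M}_m(\mathbb{M}_n)$ be positive semidefinite. Then \[ (\mathrm{tr} A)^{mn}+\big(\det(\mathrm{tr}_1 A)\big)^m\ge m^{mn}\Big(\det A+\big(\det(\mathrm{tr}_2 A)\big)^n\Big), \] and \[ (\mathrm{tr} A)^{mn}+\big(\det(\mathrm{tr}_2 A)\big)^n\ge n^{mn}\Big(\det A+\big(\det(\mathrm{tr}_1 A)\big)^m\Big). \]
   Context: $\mathbb{M}_m(\mathbb{M}_n)$ denotes the set of $mn\times mn$ complex matrices partitioned as $A=[A_{i,j}]_{i,j=1}^m$ with each block $A_{i,j}$ an $n\times n$ complex matrix. The partial traces are $\mathrm{tr}_1 A=\sum_{i=1}^m A_{i,i}\in\mathbb{M}_n$ and $\mathrm{tr}_2 A=[\mathrm{tr}\,A_{i,j}]_{i,j=1}^m\in\mathbb{M}_m$. *)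

(* Complex numbers: an arbitrary numClosedFieldType C (e.g. algC). *)
From HB Require Import structures.
From mathcomp Require Import all_boot all_order all_algebra.
Set Implicit Arguments. Unset Strict Implicit. Unset Printing Implicit Defensive.
Import Order.TTheory GRing.Theory Num.Theory.
Local Open Scope ring_scope.

Definition adjmx (C : numClosedFieldType) (p q : nat) (M : 'M[C]_(p, q)) : 'M[C]_(q, p) :=
  (map_mx Num.conj M)^T.

Definition psd (C : numClosedFieldType) (N : nat) (A : 'M[C]_N) : Prop :=
  adjmx A = A /\ forall x : 'cV[C]_N, 0 <= (adjmx x *m A *m x) 0 0.

(* A in M_m(M_n) is identified with an (m*n)x(m*n) matrix; the (k,l) entry of
   the block A_{i,j} is A (mxvec_index i k) (mxvec_index j l). *)
Definition blk (C : numClosedFieldType) (m n : nat) (A : 'M[C]_(m * n))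
  (i j : 'I_m) : 'M[C]_n :=
  \matrix_(k < n, l < n) A (mxvec_index i k) (mxvec_index j l).

(* tr_1 A = sum_i A_{i,i} in M_n *)
Definition ptr1 (C : numClosedFieldType) (m n : nat) (A : 'M[C]_(m * n)) : 'M[C]_n :=
  \sum_(i < m) blk A i i.

(* tr_2 A = [tr A_{i,j}]_{i,j} in M_m *)
Definition ptr2 (C : numClosedFieldType) (m n : nat) (A : 'M[C]_(m * n)) : 'M[C]_m :=
  \matrix_(i < m, j < m) \tr (blk A i j).

From HB Require Import structures.
From mathcomp Require Import all_boot all_order all_algebra.
Set Implicit Arguments. Unset Strict Implicit. Unset Printing Implicit Defensive.
Import Order.TTheory GRing.Theory Num.Theory.
Local Open Scope ring_scope.

(* Both inequalities split into an AM-GM part, (tr A)^{mn} >= n^{mn} (det tr_2 A)^n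
   for the m x m matrix tr_2 A (whose trace is tr A), and the key estimate
   m^{mn} det A <= (det tr_1 A)^m.  For the latter write B = tr_1 A = P^* D P
   with P unitary.  For every weight W = P^* diag(w) P >= 0, AM-GM applied to
   the psd matrix (1 (x) W^{1/2}) A (1 (x) W^{1/2}) gives
   (mn)^{mn} det A (prod w)^m <= tr(B W)^{mn}.  Taking w = D^{-1} yields the
   estimate when B is invertible; when some eigenvalue d_k vanishes, letting
   w_k -> oo forces det A = 0. *)

Section Adjoint.
Variable C : numClosedFieldType.

Lemma adjmxE p q (M : 'M[C]_(p, q)) i j : adjmx M i j = (M j i)^*.
Proof. by rewrite /adjmx !mxE. Qed.

Lemma adjmxK p q (M : 'M[C]_(p, q)) : adjmx (adjmx M) = M.
Proof. by apply/matrixP=> i j; rewrite !adjmxE conjCK. Qed.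

Lemma adjmxM p q r (A : 'M[C]_(p, q)) (B : 'M[C]_(q, r)) :
  adjmx (A *m B) = adjmx B *m adjmx A.
Proof.
apply/matrixP=> i j; rewrite adjmxE !mxE rmorph_sum /=.
by apply: eq_bigr => k _; rewrite !adjmxE rmorphM /= mulrC.
Qed.

Lemma adjmxD p q (A B : 'M[C]_(p, q)) : adjmx (A + B) = adjmx A + adjmx B.
Proof. by apply/matrixP=> i j; rewrite [LHS]adjmxE [RHS]mxE !adjmxE mxE rmorphD. Qed.

Lemma adjmx0 p q : adjmx (0 : 'M[C]_(p, q)) = 0.
Proof. by apply/matrixP=> i j; rewrite !adjmxE !mxE rmorph0. Qed.

Lemma adjmx_diag p (d : 'rV[C]_p) : adjmx (diag_mx d) = diag_mx (\row_k (d 0 k)^*).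
Proof.
apply/matrixP=> i j; rewrite adjmxE !mxE.
by have [->|ij] := eqVneq i j; rewrite ?eqxx ?(negPf ij) ?mulr1n ?mulr0n ?rmorph0.
Qed.

Lemma adjmx_trmxC p q (M : 'M[C]_(p, q)) : adjmx M = map_mx Num.conj M^T.
Proof. by apply/matrixP=> i j; rewrite adjmxE !mxE. Qed.

Lemma unitarymx_adjK p (P : 'M[C]_p) : P \is unitarymx ->
  P *m adjmx P = 1%:M /\ adjmx P *m P = 1%:M.
Proof.
move=> Pu; have Punit := unitarymx_unit Pu.
have -> : adjmx P = invmx P by rewrite invmx_unitary // adjmx_trmxC.
by rewrite mulmxV // mulVmx.
Qed.

Lemma det_spectral p (P : 'M[C]_p) (d : 'rV[C]_p) : P \is unitarymx ->
  \det (adjmx P *m diag_mx d *m P) = \prod_j d 0 j.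
Proof.
move=> /unitarymx_adjK[PP1 _].
by rewrite !det_mulmx mulrC mulrA -det_mulmx PP1 det1 mul1r det_diag.
Qed.

Lemma tr_spectral p (P : 'M[C]_p) (d : 'rV[C]_p) : P \is unitarymx ->
  \tr (adjmx P *m diag_mx d *m P) = \sum_j d 0 j.
Proof.
move=> /unitarymx_adjK[PP1 _].
by rewrite mxtrace_mulC mulmxA PP1 mul1mx mxtrace_diag.
Qed.

Lemma tr_spectral_mul p (P : 'M[C]_p) (d w : 'rV[C]_p) : P \is unitarymx ->
  \tr ((adjmx P *m diag_mx d *m P) *m (adjmx P *m diag_mx w *m P))
  = \sum_j d 0 j * w 0 j.
Proof.
move=> Pu; have [PP1 _] := unitarymx_adjK Pu.
rewrite !mulmxA -[adjmx P *m _ *m P *m adjmx P]mulmxA PP1 mulmx1.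
rewrite -(mulmxA (adjmx P)) mulmx_diag.
by rewrite tr_spectral //; apply: eq_bigr => j _; rewrite mxE.
Qed.

End Adjoint.

Section PositiveSemidefinite.
Variable C : numClosedFieldType.

Lemma psd_congr p q (X : 'M[C]_p) (M : 'M[C]_(p, q)) :
  psd X -> psd (adjmx M *m X *m M).
Proof.
move=> [XH Xge0]; split; first by rewrite !adjmxM adjmxK XH mulmxA.
by move=> x; have := Xge0 (M *m x); rewrite adjmxM !mulmxA.
Qed.

Lemma psd0 p : psd (0 : 'M[C]_p).
Proof. by split=> [|x]; rewrite ?adjmx0 // mulmx0 mul0mx mxE. Qed.

Lemma psdD p (X Y : 'M[C]_p) : psd X -> psd Y -> psd (X + Y).
Proof.
move=> [XH Xge0] [YH Yge0]; split; first by rewrite adjmxD XH YH.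
by move=> x; rewrite mulmxDr mulmxDl mxE addr_ge0.
Qed.

Lemma psd_sum p I (r : seq I) (P : pred I) (F : I -> 'M[C]_p) :
  (forall i, P i -> psd (F i)) -> psd (\sum_(i <- r | P i) F i).
Proof. by move=> Fpsd; apply: (big_ind (@psd C p)); [exact: psd0 | exact: psdD |]. Qed.

Lemma psd_spectral p (X : 'M[C]_p) : psd X ->
  exists P : 'M[C]_p, exists d : 'rV[C]_p,
    [/\ P \is unitarymx, forall j, 0 <= d 0 j & X = adjmx P *m diag_mx d *m P].
Proof.
move=> [XH Xge0].
have Xnormal : X \is normalmx.
  by apply/normalmxP; rewrite -[(X ^t* )%sesqui]adjmx_trmxC XH.
have := orthomx_spectralP Xnormal.
set P := spectralmx X; set d := spectral_diag X => XE.
have Pu : P \is unitarymx by exact: spectral_unitarymx.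
have [PP1 _] := unitarymx_adjK Pu.
have {}XE : X = adjmx P *m diag_mx d *m P by rewrite XE invmx_unitary // adjmx_trmxC.
exists P, d; split => // j.
(* The j-th eigenvalue is the quadratic form at the j-th eigenvector. *)
have := Xge0 (adjmx (row j P)).
have adj_row : adjmx (row j P) = adjmx P *m delta_mx j 0.
  by rewrite -colE; apply/matrixP=> a b; rewrite !adjmxE !mxE.
rewrite adjmxK XE !mulmxA -row_mul PP1 adj_row rowE mulmx1.
rewrite -!mulmxA (mulmxA P) PP1 mul1mx -colE -rowE.
by rewrite !mxE eqxx mulr1n.
Qed.

Lemma psd_det_ge0 p (X : 'M[C]_p) : psd X -> 0 <= \det X.
Proof.
move=> /psd_spectral[P [d [Pu dge0 ->]]].
by rewrite det_spectral // prodr_ge0.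
Qed.

Lemma psd_tr_ge0 p (X : 'M[C]_p) : psd X -> 0 <= \tr X.
Proof.
move=> /psd_spectral[P [d [Pu dge0 ->]]].
by rewrite tr_spectral // sumr_ge0.
Qed.

Lemma prod_AGM p (d : 'I_p -> C) : (forall j, 0 <= d j) ->
  p%:R ^+ p * \prod_j d j <= (\sum_j d j) ^+ p.
Proof.
case: p d => [|p] d dge0; first by rewrite !expr0 mul1r big_ord0.
have := leif_AGM (A := [pred j : 'I_p.+1 | true]) (fun j _ => dge0 j).
rewrite cardT size_enum_ord => /leif_le AGM.
apply: le_trans (ler_wpM2l _ AGM) _; first by rewrite exprn_ge0 ?ler0n.
by rewrite exprMn exprVn mulrCA mulfV ?mulr1 // expf_neq0 ?pnatr_eq0.
Qed.

Lemma psd_det_AGM p (X : 'M[C]_p) : psd X -> p%:R ^+ p * \det X <= (\tr X) ^+ p.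
Proof.
move=> /psd_spectral[P [d [Pu dge0 ->]]].
by rewrite det_spectral // tr_spectral // prod_AGM.
Qed.

Lemma psd_det_AGM_pow p q (X : 'M[C]_p) : psd X ->
  p%:R ^+ (p * q) * (\det X) ^+ q <= (\tr X) ^+ (p * q).
Proof.
move=> Xpsd; rewrite !exprM -exprMn.
apply: lerXn2r (psd_det_AGM Xpsd); rewrite nnegrE ?exprn_ge0 ?psd_tr_ge0 //.
by rewrite mulr_ge0 ?exprn_ge0 ?ler0n ?psd_det_ge0.
Qed.

End PositiveSemidefinite.

Lemma natr_exp_self_ge1 (R : numDomainType) p : 1 <= p%:R ^+ p :> R.
Proof. by case: p => [|p]; rewrite ?expr0 // exprn_ege1 // ler1n. Qed.

Lemma bounded_scaling_eq0 (R : numFieldType) (a b : R) k : (0 < k)%N ->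
  0 <= a -> (forall t, 1 <= t -> a * t ^+ k <= b) -> a = 0.
Proof.
move=> k_gt0 a_ge0 bound; apply/eqP; apply: contraT => a_neq0.
have a_gt0 : 0 < a by rewrite lt_def a_neq0.
have b_ge0 : 0 <= b by apply: le_trans (bound 1 (lexx _)); rewrite expr1n mulr1.
pose t := b / a + 1.
have t_ge1 : 1 <= t by rewrite lerDr divr_ge0.
suff : b < a * t ^+ k by move=> /lt_le_trans/(_ (bound t t_ge1)); rewrite ltxx.
apply: (@lt_le_trans _ _ (a * t)).
  by rewrite /t mulrDr mulrCA divff // !mulr1 ltrDl.
by rewrite ler_pM2l // -{1}[t]expr1 ler_weXn2l.
Qed.

Lemma det_dim0 (R : comNzRingType) p (A : 'M[R]_p) : p = 0%N -> \det A = 1.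
Proof. by move=> p0; subst p; rewrite det_mx00. Qed.

Section BlockIndexing.
Variables (C : numClosedFieldType) (m n N : nat).
Variables (e : 'I_m * 'I_n -> 'I_N) (e' : 'I_N -> 'I_m * 'I_n).
Hypotheses (eK : cancel e e') (e'K : cancel e' e).

Lemma blk_dim : N = (m * n)%N.
Proof. by rewrite -[N]card_ord -(bij_eq_card (Bijective eK e'K)) card_prod !card_ord. Qed.

Lemma sum_blk (F : 'I_N -> C) : \sum_p F p = \sum_i \sum_k F (e (i, k)).
Proof.
rewrite (reindex e); last by exists e' => x _; [apply: eK | apply: e'K].
by rewrite pair_big /=; apply: eq_bigr => -[].
Qed.

Lemma prod_blk (F : 'I_N -> C) : \prod_p F p = \prod_i \prod_k F (e (i, k)).
Proof.
rewrite (reindex e); last by exists e' => x _; [apply: eK | apply: e'K].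
by rewrite pair_big /=; apply: eq_bigr => -[].
Qed.

Lemma matrix_blkP (X Y : 'M[C]_N) :
  (forall i k j l, X (e (i, k)) (e (j, l)) = Y (e (i, k)) (e (j, l))) -> X = Y.
Proof.
move=> XY; apply/matrixP => p q; rewrite -[p]e'K -[q]e'K.
by case: (e' p) => i k; case: (e' q) => j l; apply: XY.
Qed.

Definition kron1mx (S : 'M[C]_n) : 'M[C]_N :=
  \matrix_(p, q) (((e' p).1 == (e' q).1)%:R * S (e' p).2 (e' q).2).

Lemma kron1mxE S i k j l : kron1mx S (e (i, k)) (e (j, l)) = (i == j)%:R * S k l.
Proof. by rewrite mxE !eK. Qed.

Lemma kron1mxM S T : kron1mx S *m kron1mx T = kron1mx (S *m T).
Proof.
apply: matrix_blkP => i k j l; rewrite kron1mxE [LHS]mxE sum_blk.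
rewrite (bigD1 i) //= [X in _ + X]big1 ?addr0; last first.
  by move=> i' i'i; apply: big1 => k' _; rewrite !kron1mxE eq_sym (negPf i'i) !mul0r.
rewrite mxE mulr_sumr; apply: eq_bigr => k' _.
by rewrite !kron1mxE eqxx mul1r; case: (i == j); rewrite ?mul1r ?mul0r ?mulr0.
Qed.

Lemma kron1mx_diag (w : 'rV[C]_n) :
  kron1mx (diag_mx w) = diag_mx (\row_p w 0 (e' p).2).
Proof.
apply: matrix_blkP => i k j l; rewrite kron1mxE !mxE eK.
rewrite (inj_eq (can_inj eK)) xpair_eqE.
by case: (i == j); case: (k == l); rewrite ?mul1r ?mul0r ?mulr0n ?mulr1n.
Qed.

Lemma kron1mx1 : kron1mx 1%:M = 1%:M.
Proof.
apply: matrix_blkP => i k j l; rewrite kron1mxE !mxE (inj_eq (can_inj eK)).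
by rewrite xpair_eqE; case: (i == j); rewrite ?mul1r ?mul0r.
Qed.

Lemma adjmx_kron1mx S : adjmx (kron1mx S) = kron1mx (adjmx S).
Proof.
apply: matrix_blkP => i k j l.
by rewrite adjmxE !kron1mxE adjmxE rmorphM rmorph_nat /= eq_sym.
Qed.

Lemma det_kron1mx_spectral (P : 'M[C]_n) (w : 'rV[C]_n) : P \is unitarymx ->
  \det (kron1mx (adjmx P *m diag_mx w *m P)) = (\prod_k w 0 k) ^+ m.
Proof.
move=> /unitarymx_adjK[_ P1P].
rewrite -!kron1mxM !det_mulmx mulrAC -det_mulmx kron1mxM P1P kron1mx1 det1 mul1r.
rewrite kron1mx_diag det_diag prod_blk -[m in RHS]card_ord -prodr_const.
by apply: eq_bigr => i _; apply: eq_bigr => k _; rewrite mxE eK.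
Qed.

Definition ptrace (A : 'M[C]_N) : 'M[C]_n :=
  \matrix_(k, l) \sum_i A (e (i, k)) (e (i, l)).

Definition blk_emb (i : 'I_m) : 'M[C]_(N, n) := \matrix_(p, k) (e' p == (i, k))%:R.

Lemma sum_blk_emb c (F : 'I_N -> C) : \sum_p ((e' p == c)%:R * F p) = F (e c).
Proof.
rewrite (bigD1 (e c)) //= eK eqxx mul1r big1 ?addr0 // => p pc.
suff /negPf-> : e' p != c by rewrite mul0r.
by apply: contra pc => /eqP <-; rewrite e'K.
Qed.

Lemma ptrace_sum (A : 'M[C]_N) :
  ptrace A = \sum_i adjmx (blk_emb i) *m A *m blk_emb i.
Proof.
apply/matrixP => k l; rewrite mxE summxE; apply: eq_bigr => i _.
rewrite mxE; under eq_bigr => q _ do rewrite !mxE.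
under eq_bigr => q _ do under eq_bigr => p _ do rewrite adjmxE mxE rmorph_nat.
under eq_bigr => q _ do rewrite sum_blk_emb mulrC.
by rewrite sum_blk_emb.
Qed.

Lemma psd_ptrace A : psd A -> psd (ptrace A).
Proof. by move=> Apsd; rewrite ptrace_sum; apply: psd_sum => i _; apply: psd_congr. Qed.

Lemma tr_mul_kron1mx A T : \tr (A *m kron1mx T) = \tr (ptrace A *m T).
Proof.
have diagE i k : (A *m kron1mx T) (e (i, k)) (e (i, k)) =
    \sum_l A (e (i, k)) (e (i, l)) * T l k.
  rewrite mxE sum_blk (bigD1 i) //= [X in _ + X]big1 ?addr0.
    by apply: eq_bigr => l _; rewrite kron1mxE eqxx mul1r.
  by move=> j ji; apply: big1 => l _; rewrite kron1mxE (negPf ji) mul0r mulr0.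
rewrite /mxtrace sum_blk.
under eq_bigr => i _ do under eq_bigr => k _ do rewrite diagE.
under [RHS]eq_bigr => k _ do rewrite mxE.
under [RHS]eq_bigr => k _ do under eq_bigr => l _ do rewrite mxE mulr_suml.
under [RHS]eq_bigr => k _ do rewrite exchange_big.
by rewrite exchange_big.
Qed.

Lemma tr_ptrace A : \tr (ptrace A) = \tr A.
Proof. by have := tr_mul_kron1mx A 1%:M; rewrite kron1mx1 !mulmx1. Qed.

Lemma ptrace_AGM_weighted A (P : 'M[C]_n) (w : 'rV[C]_n) :
  psd A -> P \is unitarymx -> (forall k, 0 <= w 0 k) ->
  N%:R ^+ N * (\det A * (\prod_k w 0 k) ^+ m)
    <= (\tr (ptrace A *m (adjmx P *m diag_mx w *m P))) ^+ N.
Proof.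
move=> Apsd Pu wge0.
pose S := diag_mx (\row_k sqrtC (w 0 k)) *m P.
have SS : adjmx S *m S = adjmx P *m diag_mx w *m P.
  rewrite adjmxM adjmx_diag -mulmxA (mulmxA (diag_mx _)) mulmx_diag mulmxA.
  congr (_ *m diag_mx _ *m _); apply/rowP => k; rewrite !mxE.
  by rewrite geC0_conj ?sqrtC_ge0 // -expr2 sqrtCK.
pose M := kron1mx S.
have MM : adjmx M *m M = kron1mx (adjmx P *m diag_mx w *m P).
  by rewrite adjmx_kron1mx kron1mxM SS.
have Xpsd : psd (M *m A *m adjmx M).
  by rewrite -{1}[M]adjmxK; apply: psd_congr.
have detX : \det (M *m A *m adjmx M) = \det A * (\prod_k w 0 k) ^+ m.
  by rewrite !det_mulmx mulrAC mulrC [\det M * _]mulrC -det_mulmx MM det_kron1mx_spectral.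
have trX : \tr (M *m A *m adjmx M) = \tr (ptrace A *m (adjmx P *m diag_mx w *m P)).
  by rewrite mxtrace_mulC (mulmxA (adjmx M)) MM mxtrace_mulC tr_mul_kron1mx.
by rewrite -detX -trX psd_det_AGM.
Qed.

Section SpectralWeights.
Variables (A : 'M[C]_N) (P : 'M[C]_n) (d : 'rV[C]_n).
Hypotheses (Apsd : psd A) (Pu : P \is unitarymx) (d_ge0 : forall k, 0 <= d 0 k).
Hypothesis ptraceE : ptrace A = adjmx P *m diag_mx d *m P.

Lemma ptrace_AGM_spectral (w : 'rV[C]_n) : (forall k, 0 <= w 0 k) ->
  N%:R ^+ N * (\det A * (\prod_k w 0 k) ^+ m) <= (\sum_k d 0 k * w 0 k) ^+ N.
Proof.
move=> w_ge0; have := ptrace_AGM_weighted Apsd Pu w_ge0.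
by rewrite ptraceE tr_spectral_mul.
Qed.

(* Weight t on a null eigenvector: the bound on det A then grows like t^m. *)
Lemma det_ptrace_singular k0 : d 0 k0 = 0 -> (0 < m)%N -> \det A = 0.
Proof.
move=> dk0 m_gt0.
apply: (bounded_scaling_eq0 (b := (\sum_k d 0 k) ^+ N) m_gt0 (psd_det_ge0 Apsd)).
move=> t t_ge1; pose w := \row_k (if k == k0 then t else 1).
have w_ge0 k : 0 <= w 0 k by rewrite mxE; case: ifP => // _; apply: le_trans t_ge1.
have sum_dw : \sum_k d 0 k * w 0 k = \sum_k d 0 k.
  by apply: eq_bigr => k _; rewrite mxE; case: eqP => [->|_]; rewrite ?dk0 ?mul0r ?mulr1.
have prod_w : \prod_k w 0 k = t.
  by rewrite (bigD1 k0) //= mxE eqxx big1 ?mulr1 // => k /negPf kk0; rewrite mxE kk0.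
have := ptrace_AGM_spectral w_ge0; rewrite sum_dw prod_w; apply: le_trans.
rewrite ler_peMl ?natr_exp_self_ge1 //.
by rewrite mulr_ge0 ?psd_det_ge0 // exprn_ge0 // (le_trans ler01).
Qed.

(* The weight w = d^-1, i.e. W = (ptrace A)^-1, makes the trace equal to n. *)
Lemma det_ptrace_nonsingular : (forall k, d 0 k != 0) ->
  m%:R ^+ N * \det A <= (\prod_k d 0 k) ^+ m.
Proof.
move=> d_neq0; pose w := \row_k (d 0 k)^-1.
have w_ge0 k : 0 <= w 0 k by rewrite mxE invr_ge0.
have := ptrace_AGM_spectral w_ge0.
have -> : \sum_k d 0 k * w 0 k = n%:R.
  by under eq_bigr => k _ do rewrite mxE mulfV //; rewrite sumr_const card_ord.
have -> : \prod_k w 0 k = (\prod_k d 0 k)^-1.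
  by rewrite -prodfV; apply: eq_bigr => k _; rewrite mxE.
set D := \prod_k d 0 k.
have D_gt0 : 0 < D by rewrite lt_def prodr_ge0 ?andbT //; apply/prodf_neq0.
have [n0 | n_gt0] := posnP n.
  have N0 : N = 0%N by rewrite blk_dim n0 muln0.
  rewrite (det_dim0 A N0) N0 !expr0 !mul1r => _.
  by rewrite /D big1 ?expr1n // => k; have := leq_trans (ltn_ord k) (eq_leq n0).
have Dm_neq0 : D ^+ m != 0 by rewrite expf_neq0 ?gt_eqF.
rewrite [N in N%:R]blk_dim natrM exprMn exprVn -(ler_pM2r (exprn_gt0 m D_gt0)).
rewrite -!mulrA mulVf // mulr1 [_ * D ^+ m]mulrC mulrCA [D ^+ m * _]mulrC.
by rewrite ler_pM2l // exprn_gt0 // ltr0n.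
Qed.

End SpectralWeights.

Lemma det_ptrace_bound A : psd A -> m%:R ^+ N * \det A <= (\det (ptrace A)) ^+ m.
Proof.
move=> Apsd; have [P [d [Pu d_ge0 ptraceE]]] := psd_spectral (psd_ptrace Apsd).
rewrite ptraceE det_spectral //.
have [k0 /eqP dk0 | d_neq0] := pickP (fun k => d 0 k == 0); last first.
  by apply: det_ptrace_nonsingular ptraceE _ => // k; apply/negbT/d_neq0.
rewrite (bigD1 k0) //= dk0 mul0r.
have [m0 | m_gt0] := posnP m.
  by rewrite (det_dim0 A) ?blk_dim m0 // !expr0 mulr1.
by rewrite (det_ptrace_singular Apsd Pu ptraceE dk0) // mulr0 expr0n gtn_eqF.
Qed.

End BlockIndexing.

Section PartialTraces.
Variables (m n : nat).

Definition blk_index (ik : 'I_m * 'I_n) : 'I_(m * n) := mxvec_index ik.1 ik.2.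

Definition blk_unindex (p : 'I_(m * n)) : 'I_m * 'I_n :=
  enum_val (cast_ord (esym (mxvec_cast m n)) p).

Lemma blk_indexK : cancel blk_index blk_unindex.
Proof. by case=> i k; rewrite /blk_unindex cast_ordK enum_rankK. Qed.

Lemma blk_unindexK : cancel blk_unindex blk_index.
Proof.
move=> p; rewrite /blk_index /mxvec_index -surjective_pairing enum_valK.
by rewrite cast_ordKV.
Qed.

Definition blk_index_swap (ki : 'I_n * 'I_m) : 'I_(m * n) := blk_index (ki.2, ki.1).

Definition blk_unindex_swap (p : 'I_(m * n)) : 'I_n * 'I_m :=
  ((blk_unindex p).2, (blk_unindex p).1).

Lemma blk_index_swapK : cancel blk_index_swap blk_unindex_swap.
Proof. by case=> k i; rewrite /blk_unindex_swap blk_indexK. Qed.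

Lemma blk_unindex_swapK : cancel blk_unindex_swap blk_index_swap.
Proof. by move=> p; rewrite /blk_index_swap /= -surjective_pairing blk_unindexK. Qed.

Variable C : numClosedFieldType.

Lemma ptr1E (A : 'M[C]_(m * n)) : ptr1 A = ptrace blk_index A.
Proof. by apply/matrixP => k l; rewrite summxE mxE; apply: eq_bigr => i _; rewrite mxE. Qed.

Lemma ptr2E (A : 'M[C]_(m * n)) : ptr2 A = ptrace blk_index_swap A.
Proof. by apply/matrixP => i j; rewrite !mxE; apply: eq_bigr => k _; rewrite mxE. Qed.

Lemma psd_ptr1 (A : 'M[C]_(m * n)) : psd A -> psd (ptr1 A).
Proof. by rewrite ptr1E; apply: (psd_ptrace blk_indexK blk_unindexK). Qed.

Lemma psd_ptr2 (A : 'M[C]_(m * n)) : psd A -> psd (ptr2 A).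
Proof. by rewrite ptr2E; apply: (psd_ptrace blk_index_swapK blk_unindex_swapK). Qed.

Lemma tr_ptr1 (A : 'M[C]_(m * n)) : \tr (ptr1 A) = \tr A.
Proof. by rewrite ptr1E (tr_ptrace blk_indexK blk_unindexK). Qed.

Lemma tr_ptr2 (A : 'M[C]_(m * n)) : \tr (ptr2 A) = \tr A.
Proof. by rewrite ptr2E (tr_ptrace blk_index_swapK blk_unindex_swapK). Qed.

Lemma det_ptr1_bound (A : 'M[C]_(m * n)) : psd A ->
  m%:R ^+ (m * n) * \det A <= (\det (ptr1 A)) ^+ m.
Proof. by rewrite ptr1E; apply: (det_ptrace_bound blk_indexK blk_unindexK). Qed.

Lemma det_ptr2_bound (A : 'M[C]_(m * n)) : psd A ->
  n%:R ^+ (m * n) * \det A <= (\det (ptr2 A)) ^+ n.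
Proof. by rewrite ptr2E; apply: (det_ptrace_bound blk_index_swapK blk_unindex_swapK). Qed.

End PartialTraces.

Theorem theorem4p7 (C : numClosedFieldType) (m n : nat) (A : 'M[C]_(m * n)) :
  psd A ->
  ((\tr A) ^+ (m * n) + (\det (ptr1 A)) ^+ m
     >= (m%:R) ^+ (m * n) * (\det A + (\det (ptr2 A)) ^+ n))
  /\
  ((\tr A) ^+ (m * n) + (\det (ptr2 A)) ^+ n
     >= (n%:R) ^+ (m * n) * (\det A + (\det (ptr1 A)) ^+ m)).
Proof.
move=> Apsd; rewrite !mulrDr ![_ ^+ (m * n) + _]addrC; split; apply: lerD.
- exact: det_ptr1_bound.
- by rewrite -(tr_ptr2 A); apply: psd_det_AGM_pow; apply: psd_ptr2.
- exact: det_ptr2_bound.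
- by rewrite -(tr_ptr1 A) mulnC; apply: psd_det_AGM_pow; apply: psd_ptr1.
Qed.
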